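(* If $s\ge 7$ then $\pi\ge 2(n-q-2m)$.
   Context: $G$ is a set of size $n$ and $G(\circ)$, $G(\ast)$ are distinct groups on $G$ with the same identity element. $\mathrm{diff}(\circ,\ast)=\{(a,b):a\circ b\ne a\ast b\}$, $\mathrm{dist}(\circ,\ast)=|\mathrm{diff}(\circ,\ast)|$, $\mathrm{dist}_a=|\{b:a\circ b\ne a\ast b\}|$; $H=\{a:\mathrm{dist}_a=0\}$, $h=|H|$; $K=\{a:\mathrm{dist}_a<n/3\}$, $k=|K|$; $m=\min\{\mathrm{dist}_a:\mathrm{dist}_a>0\}$. Standing assumption: $m\ge 3$. Let $q=\lceil n/3\rceil$ and the profit $\pi=\mathrm{dist}(\circ,\ast)-((k-h)m+(n-k)q)$. Let $S=\{(a,b)\in\mathrm{diff}(\circ,\ast):a,b\in K,\ a\ne b\}$, $s=|S|$. *)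

From HB Require Import structures.
From mathcomp Require Import all_boot all_order all_algebra.
Set Implicit Arguments. Unset Strict Implicit. Unset Printing Implicit Defensive.
Import Order.TTheory GRing.Theory Num.Theory.

Section Defs.
Variable T : finType.

Definition is_group (op : T -> T -> T) (e : T) : Prop :=
  [/\ associative op, left_id e op, right_id e op &
      forall a, exists b, op a b = e /\ op b a = e].

Variables (o1 o2 : T -> T -> T).

Definition nG : nat := #|T|.

Definition diffset : {set T * T} := [set p | o1 p.1 p.2 != o2 p.1 p.2].
Definition distG : nat := #|diffset|.
Definition dist_at (a : T) : nat := #|[set b | o1 a b != o2 a b]|.
Definition Hset : {set T} := [set a | dist_at a == 0%N].
Definition hG : nat := #|Hset|.
(* K = {a : dist_a < n/3}, i.e. 3 * dist_a < n; k = |K| *)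
Definition Kset : {set T} := [set a | 3 * dist_at a < nG].
Definition kG : nat := #|Kset|.
(* m = min { dist_a : dist_a > 0 } (the default value #|T| is irrelevant
   when the two laws differ, since then the index range is nonempty and
   every dist_a <= #|T|) *)
Definition mG : nat := \big[minn/nG]_(a | 0 < dist_at a) dist_at a.
(* q = ceil(n/3) *)
Definition qG : nat := (nG + 2) %/ 3.
Definition profit : int :=
  (distG%:Z - (((kG%:Z - hG%:Z) * mG%:Z) + ((nG%:Z - kG%:Z) * qG%:Z)))%R.
Definition Sset : {set T * T} :=
  [set p in diffset | [&& p.1 \in Kset, p.2 \in Kset & p.1 != p.2]].
Definition sG : nat := #|Sset|.
End Defs.

(** Put Q = n - q - 2m.  If x∘y <> x*y, every column w with y∘w = y*w and
  x∘(y∘w) = x*(y∘w) is one where the rows of x∘y differ (cancel w on the right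
  in the second law); the other columns are bounded through y and x, so
  dist(x∘y) + dist x + dist y >= n.  Hence for (x, y) in S the products x∘y and
  x*y lie outside K, and the excesses dist_a - cost_a of x, y and x∘y add up to
  at least Q; the profit is the sum of all the excesses, each nonnegative.
  Pairwise meeting loopless pairs with all in- and out-degrees at most 2 number
  at most 6 (they live on a star or a triangle), so seven pairs in S give either
  two triangles on six distinct points or three triangles sharing a point c of
  K with 2 excess(c) <= Q; either way the profit is at least 2Q. *)

From HB Require Import structures.
From mathcomp Require Import all_boot all_order all_algebra zify.
Import Order.TTheory GRing.Theory Num.Theory.
Set Implicit Arguments. Unset Strict Implicit.

Section GroupLaw.
Variables (T : finType) (op : T -> T -> T) (e : T).
Hypothesis gop : is_group op e.

Lemma is_group_mulgI a : injective (op a).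
Proof.
case: gop => opA op1 _ opV b c eq_ab_ac.
have [a' [_ a'a]] := opV a.
by rewrite -(op1 b) -(op1 c) -a'a -!opA eq_ab_ac.
Qed.

Lemma is_group_mulIg a : injective (op^~ a).
Proof.
case: gop => opA _ opr1 opV b c eq_ba_ca.
have [a' [aa' _]] := opV a.
by rewrite -(opr1 b) -(opr1 c) -aa' !opA eq_ba_ca.
Qed.

Lemma is_group_assoc : associative op.
Proof. by case: gop. Qed.

End GroupLaw.

Lemma dist_atC (T : finType) (f g : T -> T -> T) a : dist_at f g a = dist_at g f a.
Proof. by apply: eq_card => b; rewrite !inE eq_sym. Qed.

Section DistanceOfProduct.
Variables (T : finType) (f g : T -> T -> T).
Hypotheses (fA : associative f) (gA : associative g).
Hypotheses (f_inj : right_injective f) (g_inj : left_injective g).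

Lemma dist_at_mul x y : f x y != g x y ->
  #|T| <= dist_at f g (f x y) + dist_at f g x + dist_at f g y.
Proof.
move=> neq_xy.
pose W := [set w | (f y w == g y w) && (f x (f y w) == g x (f y w))].
have W_sub : W \subset [set b | f (f x y) b != g (f x y) b].
  apply/subsetP => w; rewrite !inE => /andP [/eqP eq_yw /eqP eq_xyw].
  apply: contra neq_xy => /eqP eq_xy_w; apply/eqP/(@g_inj w).
  by rewrite -eq_xy_w -fA eq_xyw eq_yw gA.
have WC_sub : ~: W \subset
    [set b | f y b != g y b] :|: f y @^-1: [set b | f x b != g x b].
  by apply/subsetP => w; rewrite !inE negb_and => /orP [-> | ->]; rewrite ?orbT.
have card_WC := leq_trans (subset_leq_card WC_sub) (leq_card_setU _ _).
rewrite card_preimset in card_WC; last exact: f_inj.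
have := subset_leq_card W_sub; have := cardsC W; rewrite /dist_at; lia.
Qed.

End DistanceOfProduct.

Ltac solve_by_disjunction_congruence :=
  first [ congruence
        | match goal with H : _ \/ _ |- _ =>
            destruct H; solve_by_disjunction_congruence end ].

Section PairsOfPoints.
Variable T : finType.
Implicit Types (S : {set T * T}) (p : T * T).

Definition pairs_meet p p' :=
  [|| p.1 == p'.1, p.1 == p'.2, p.2 == p'.1 | p.2 == p'.2].

Definition succs S x := [set y | (x, y) \in S].
Definition preds S y := [set x | (x, y) \in S].

Lemma pairs_meetP p p' : pairs_meet p p' ->
  p.1 = p'.1 \/ p.1 = p'.2 \/ p.2 = p'.1 \/ p.2 = p'.2.
Proof. by case/or4P => /eqP; tauto. Qed.

Lemma mem_pair_succs S p : p \in S -> p \in [set (p.1, y) | y in succs S p.1].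
Proof. by case: p => x y pS; apply/imsetP; exists y; rewrite ?inE. Qed.

Lemma mem_pair_preds S p : p \in S -> p \in [set (x, p.2) | x in preds S p.2].
Proof. by case: p => x y pS; apply/imsetP; exists x; rewrite ?inE. Qed.

Lemma card_pairs_through S v :
  {in S, forall p, (p.1 == v) || (p.2 == v)} ->
  #|S| <= #|succs S v| + #|preds S v|.
Proof.
move=> S_v.
have S_sub : S \subset [set (v, y) | y in succs S v] :|: [set (x, v) | x in preds S v].
  apply/subsetP => p pS; rewrite inE.
  by case/orP: (S_v p pS) => /eqP <-; rewrite ?mem_pair_succs ?mem_pair_preds ?orbT.
apply: leq_trans (subset_leq_card S_sub) _; apply: leq_trans (leq_card_setU _ _) _.
by apply: leq_add; apply: leq_imset_card.
Qed.

Lemma pairwise_meeting_tails S a b u1 v1 u2 v2 p :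
  {in S, forall p, p.1 != p.2} -> {in S &, forall p p', pairs_meet p p'} ->
  (a, b) \in S -> (u1, v1) \in S -> (u2, v2) \in S -> p \in S ->
  ~~ ((u1 == a) || (v1 == a)) -> ~~ ((u2 == b) || (v2 == b)) ->
  p.1 \in [set a; u1; v1].
Proof.
move=> loopless meet abS p1S p2S pS.
have m10 := pairs_meetP (meet _ _ p1S abS); have m20 := pairs_meetP (meet _ _ p2S abS).
have m12 := pairs_meetP (meet _ _ p1S p2S); have mp0 := pairs_meetP (meet _ _ pS abS).
have mp1 := pairs_meetP (meet _ _ pS p1S); have mp2 := pairs_meetP (meet _ _ pS p2S).
move: (loopless _ abS) (loopless _ p1S) (loopless _ p2S) (loopless _ pS) m10 m20 m12 mp0 mp1 mp2.
case: p pS => x y _ /=; rewrite !inE !negb_or.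
move=> /eqP ? /eqP ? /eqP ? /eqP ? ? ? ? ? ? ? /andP [/eqP ? /eqP ?] /andP [/eqP ? /eqP ?].
case: (x =P a) => //= ?; case: (x =P u1) => //= ?; case: (x =P v1) => //= ?.
exfalso; solve_by_disjunction_congruence.
Qed.

Lemma card_pairwise_meeting S :
  {in S, forall p, p.1 != p.2} -> {in S &, forall p p', pairs_meet p p'} ->
  (forall x, #|succs S x| <= 2) -> (forall y, #|preds S y| <= 2) ->
  #|S| <= 6.
Proof.
move=> loopless meet succs_le2 preds_le2.
have [-> | [[a b] abS]] := set_0Vmem S; first by rewrite cards0.
have [/forall_inP S_a | /forall_inPn [[u1 v1] p1S avoid_a]] :=
  boolP [forall (p | p \in S), (p.1 == a) || (p.2 == a)].
  by have := card_pairs_through S_a; have := succs_le2 a; have := preds_le2 a; lia.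
have [/forall_inP S_b | /forall_inPn [[u2 v2] p2S avoid_b]] :=
  boolP [forall (p | p \in S), (p.1 == b) || (p.2 == b)].
  by have := card_pairs_through S_b; have := succs_le2 b; have := preds_le2 b; lia.
pose from x := [set (x, y) | y in succs S x].
have S_sub : S \subset from a :|: from u1 :|: from v1.
  apply/subsetP => p pS; have := pairwise_meeting_tails loopless meet abS p1S p2S pS avoid_a avoid_b.
  by rewrite !inE => /orP [/orP [] |] /eqP tail_p; rewrite -tail_p mem_pair_succs ?orbT.
have card_from x : #|from x| <= 2 := leq_trans (leq_imset_card _ _) (succs_le2 x).
apply: leq_trans (subset_leq_card S_sub) _.
have card_U3 : #|from a :|: from u1 :|: from v1| <= #|from a :|: from u1| + #|from v1|.
  exact: leq_card_setU.
have card_U2 : #|from a :|: from u1| <= #|from a| + #|from u1| by exact: leq_card_setU.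
apply: leq_trans card_U3 _; rewrite -[6]/(2 + 2 + 2); apply: leq_add (card_from v1).
by apply: leq_trans card_U2 _; apply: leq_add.
Qed.

Lemma pairs_disjoint_or_branching S :
  {in S, forall p, p.1 != p.2} -> 7 <= #|S| ->
  [\/ exists p p', [/\ p \in S, p' \in S & ~~ pairs_meet p p'],
      exists x, 2 < #|succs S x|
    | exists y, 2 < #|preds S y|].
Proof.
move=> loopless card_S.
have [/existsP succs_gt2 | /existsPn succs_le2] := boolP [exists x, 2 < #|succs S x|].
  by constructor 2.
have [/existsP preds_gt2 | /existsPn preds_le2] := boolP [exists y, 2 < #|preds S y|].
  by constructor 3.
have [/exists_inP [p pS /exists_inP [p' p'S disj]] | /exists_inPn meet] :=
  boolP [exists (p | p \in S), exists (p' | p' \in S), ~~ pairs_meet p p'].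
  by constructor 1; exists p, p'.
suff : #|S| <= 6 by lia.
apply: card_pairwise_meeting => //.
- by move=> p p' pS p'S; have /exists_inPn/(_ p' p'S) := meet p pS; rewrite negbK.
- by move=> x; rewrite leqNgt succs_le2.
- by move=> y; rewrite leqNgt preds_le2.
Qed.

End PairsOfPoints.

Lemma cat_uniq_sep (X : eqType) (P : pred X) (s1 s2 : seq X) :
  all P s1 -> all (predC P) s2 -> uniq (s1 ++ s2) = uniq s1 && uniq s2.
Proof.
move=> /allP P_s1 /allP notP_s2; rewrite cat_uniq.
suff -> : ~~ has (mem s1) s2 by case: (uniq s1).
apply/hasPn => z /notP_s2 /= notPz; apply: contra notPz; exact: P_s1.
Qed.

Section Profit.
Variables (T : finType) (o1 o2 : T -> T -> T) (e : T).
Hypotheses (g1 : is_group o1 e) (g2 : is_group o2 e).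
Local Notation d := (dist_at o1 o2).
Local Notation m := (mG o1 o2).
Local Notation q := (qG T).
Local Notation K := (Kset o1 o2).
Local Notation H := (Hset o1 o2).
Local Notation S := (Sset o1 o2).
Local Notation Q := ((nG T)%:Z - q%:Z - 2%:Z * m%:Z)%R.

Definition cost a : nat := if a \in H then 0 else if a \in K then m else q.
Definition excess a : int := ((d a)%:Z - (cost a)%:Z)%R.

Lemma distG_sum : distG o1 o2 = \sum_a d a.
Proof.
rewrite /distG /diffset /dist_at.
under eq_bigr => a _ do rewrite -sum1dep_card.
rewrite pair_big_dep /= sum1dep_card.
by apply: eq_card => p; rewrite !inE.
Qed.

Lemma H_subset_K : H \subset K.
Proof.
apply/subsetP => a; rewrite !inE /nG => /eqP ->.
by apply/card_gt0P; exists a.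
Qed.

Lemma sum_cost : \sum_a cost a = (kG o1 o2 - hG o1 o2) * m + (nG T - kG o1 o2) * q.
Proof.
have -> : \sum_a cost a = \sum_(a in K :\: H) m + \sum_(a in ~: K) q.
  rewrite (big_mkcond (fun a => a \in K :\: H)) (big_mkcond (fun a => a \in ~: K)).
  rewrite -big_split /=; apply: eq_bigr => a _.
  rewrite /cost in_setD in_setC.
  have [aH | _] := boolP (a \in H); last by case: (a \in K); rewrite ?addn0.
  by rewrite (subsetP H_subset_K a aH).
rewrite !sum_nat_const cardsD (setIidPr H_subset_K) /kG /hG /nG.
by rewrite [#|~: K|]cardsCs setCK.
Qed.

Lemma profit_sum : profit o1 o2 = (\sum_a excess a)%R.
Proof.
have card_H_K : hG o1 o2 <= kG o1 o2 := subset_leq_card H_subset_K.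
have card_K : kG o1 o2 <= nG T := max_card _.
rewrite /excess sumrB -!(big_morph Posz PoszD (erefl (Posz 0))) -distG_sum sum_cost /profit.
by rewrite PoszD !PoszM -(subzn card_H_K) -(subzn card_K).
Qed.

Lemma mG_le_dist a : 0 < d a -> m <= d a.
Proof.
move=> d_gt0; rewrite /mG -Order.NatOrder.minEnat.
exact: (@bigmin_le_cond _ nat T _ a (fun b => 0 < d b)).
Qed.

Lemma cost_le_dist a : cost a <= d a.
Proof.
rewrite /cost; have [// | aNH] := boolP (a \in H).
have [_ | ] := boolP (a \in K).
  by apply: mG_le_dist; move: aNH; rewrite inE lt0n.
by rewrite inE /qG -leqNgt; lia.
Qed.

Lemma excess_ge0 a : (0 <= excess a)%R.
Proof. by rewrite subr_ge0 lez_nat cost_le_dist. Qed.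

Lemma sum_excess_le_profit (s : seq T) : uniq s -> (\sum_(a <- s) excess a <= profit o1 o2)%R.
Proof.
move=> s_uniq; rewrite profit_sum big_uniq //= [leLHS]big_mkcond /=.
by apply: ler_sum => a _; case: ifP => // _; apply: excess_ge0.
Qed.

Lemma excess_K a : a \in K -> ((d a)%:Z - m%:Z <= excess a)%R.
Proof. by rewrite /excess /cost => ->; case: (a \in H); lia. Qed.

Lemma excess_notK a : a \notin K -> excess a = ((d a)%:Z - q%:Z)%R.
Proof.
move=> aNK; rewrite /excess /cost (negbTE aNK).
by rewrite (contraNF (subsetP H_subset_K a) aNK).
Qed.

(* For a in H this says Q >= 0, which is where m < q is needed. *)
Lemma excess_K_half a : m < q -> a \in K -> (2%:Z * excess a <= Q)%R.
Proof.
rewrite /excess /cost /qG /nG => m_lt_q aK; rewrite aK.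
have [aH | _] := boolP (a \in H); last by move: aK; rewrite inE /nG; lia.
by move: aH; rewrite inE => /eqP ->; lia.
Qed.

Lemma mem_Sset p : p \in S ->
  [/\ o1 p.1 p.2 != o2 p.1 p.2, p.1 \in K, p.2 \in K & p.1 != p.2].
Proof. by rewrite !inE => /andP [-> /and3P [-> -> ->]]. Qed.

Lemma Sset_mG_lt_qG p : p \in S -> m < q.
Proof.
case/mem_Sset => neq p1K _ _.
have d_gt0 : 0 < d p.1 by apply/card_gt0P; exists p.2; rewrite inE.
by have := mG_le_dist d_gt0; move: p1K; rewrite inE /qG /nG; lia.
Qed.

Lemma triangle_excess x y z : (x, y) \in S -> z = o1 x y \/ z = o2 x y ->
  z \notin K /\ (Q <= excess x + excess y + excess z)%R.
Proof.
case/mem_Sset => /= neq xK yK _ z_xy.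
have dist_z : #|T| <= d z + d x + d y.
  have [A1 A2] := (is_group_assoc g1, is_group_assoc g2).
  case: z_xy => ->.
    exact: dist_at_mul A1 A2 (is_group_mulgI g1) (is_group_mulIg g2) _ _ neq.
  rewrite !(dist_atC o1 o2).
  by apply: dist_at_mul A2 A1 (is_group_mulgI g2) (is_group_mulIg g1) _ _ _; rewrite eq_sym.
have zNK : z \notin K by move: xK yK; rewrite !inE /nG; lia.
split=> //; have := excess_K xK; have := excess_K yK; rewrite (excess_notK zNK) /nG; lia.
Qed.

Lemma profit_ge_two_triangles x1 y1 x2 y2 z1 z2 :
  uniq [:: x1; y1; x2; y2; z1; z2] ->
  (Q <= excess x1 + excess y1 + excess z1)%R ->
  (Q <= excess x2 + excess y2 + excess z2)%R ->
  (2%:Z * Q <= profit o1 o2)%R.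
Proof. by move=> /sum_excess_le_profit; rewrite !big_cons big_nil; lia. Qed.

Lemma profit_ge_three_triangles c w1 w2 w3 z1 z2 z3 :
  uniq [:: c; w1; w2; w3; z1; z2; z3] -> (2%:Z * excess c <= Q)%R ->
  (Q <= excess c + excess w1 + excess z1)%R ->
  (Q <= excess c + excess w2 + excess z2)%R ->
  (Q <= excess c + excess w3 + excess z3)%R ->
  (2%:Z * Q <= profit o1 o2)%R.
Proof. by move=> /sum_excess_le_profit; rewrite !big_cons big_nil; lia. Qed.

Lemma profit_disjoint_pairs p p' : p \in S -> p' \in S -> ~~ pairs_meet p p' ->
  (2%:Z * Q <= profit o1 o2)%R.
Proof.
case: p p' => x y [x' y'] pS p'S; rewrite /pairs_meet !negb_or /=.
case/and4P => xx' xy' yx' yy'.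
have [zNK tri] := triangle_excess pS (or_introl erefl).
have [z' [zz' z'NK tri']] : exists z', [/\ o1 x y != z', z' \notin K &
    (Q <= excess x' + excess y' + excess z')%R].
  have [eq_z | ne_z] := eqVneq (o1 x y) (o1 x' y').
    exists (o2 x' y'); have [? ?] := triangle_excess p'S (or_intror erefl).
    by rewrite eq_z; case/mem_Sset: p'S.
  by exists (o1 x' y'); have [? ?] := triangle_excess p'S (or_introl erefl).
case/mem_Sset: pS => /= _ xK yK xy; case/mem_Sset: p'S => /= _ x'K y'K x'y'.
apply: profit_ge_two_triangles tri tri'.
have all_K : all (mem K) [:: x; y; x'; y'] by rewrite /= xK yK x'K y'K.
have all_NK : all (predC (mem K)) [:: o1 x y; z'] by rewrite /= zNK z'NK.
change (uniq ([:: x; y; x'; y'] ++ [:: o1 x y; z'])).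
by rewrite (cat_uniq_sep all_K all_NK) /= !inE !negb_or xy xx' xy' yx' yy' x'y' zz'.
Qed.

Lemma profit_star c (t : T -> T) (W : {set T}) :
  m < q -> injective t -> c \in K -> 2 < #|W| ->
  {in W, forall w, [/\ w \in K, w != c, t w \notin K &
                      (Q <= excess c + excess w + excess (t w))%R]} ->
  (2%:Z * Q <= profit o1 o2)%R.
Proof.
move=> m_lt_q t_inj cK /card_gt2P [w1 [w2 [w3 [[w1W w2W w3W] [w12 w23 w31]]]]] W_tri.
have [w1K w1c tw1NK tri1] := W_tri _ w1W.
have [w2K w2c tw2NK tri2] := W_tri _ w2W.
have [w3K w3c tw3NK tri3] := W_tri _ w3W.
apply: profit_ge_three_triangles (excess_K_half m_lt_q cK) tri1 tri2 tri3.
have all_K : all (mem K) [:: c; w1; w2; w3] by rewrite /= cK w1K w2K w3K.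
have all_NK : all (predC (mem K)) (map t [:: w1; w2; w3]) by rewrite /= tw1NK tw2NK tw3NK.
change (uniq ([:: c; w1; w2; w3] ++ map t [:: w1; w2; w3])).
rewrite (cat_uniq_sep all_K all_NK) map_inj_uniq //= !inE !negb_or.
by rewrite ![c == _]eq_sym w1c w2c w3c w12 w23 [w1 == w3]eq_sym w31.
Qed.

Lemma profit_succs x : 2 < #|succs S x| -> (2%:Z * Q <= profit o1 o2)%R.
Proof.
move=> card_succs; have /card_gt0P [y] : 0 < #|succs S x| by lia.
rewrite inE => xyS; have /mem_Sset /= [_ xK _ _] := xyS.
apply: profit_star (Sset_mG_lt_qG xyS) (is_group_mulgI g1 (a := x)) xK card_succs _.
move=> w; rewrite inE => xwS; have [twNK tri] := triangle_excess xwS (or_introl erefl).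
by case/mem_Sset: xwS => _ _ wK xw; rewrite eq_sym.
Qed.

Lemma profit_preds y : 2 < #|preds S y| -> (2%:Z * Q <= profit o1 o2)%R.
Proof.
move=> card_preds; have /card_gt0P [x] : 0 < #|preds S y| by lia.
rewrite inE => xyS; have /mem_Sset /= [_ _ yK _] := xyS.
apply: profit_star (Sset_mG_lt_qG xyS) (is_group_mulIg g1 (a := y)) yK card_preds _.
move=> w; rewrite inE => wyS; have [twNK tri] := triangle_excess wyS (or_introl erefl).
by case/mem_Sset: wyS => _ wK _ wy; rewrite (addrC (excess y)).
Qed.

End Profit.

Theorem lemma9p6 (T : finType) (o1 o2 : T -> T -> T) (e : T)
  (g1 : is_group o1 e) (g2 : is_group o2 e) (hdist : o1 <> o2)
  (hm : (3 <= mG o1 o2)%N) (hs : (7 <= sG o1 o2)%N) :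
  (2%:Z * ((nG T)%:Z - (qG T)%:Z - 2%:Z * (mG o1 o2)%:Z) <= profit o1 o2)%R.
Proof.
have loopless : {in Sset o1 o2, forall p, p.1 != p.2} by move=> p /mem_Sset [].
case: (pairs_disjoint_or_branching loopless hs) => [[p [p' [pS p'S disj]]] | [x] | [y]].
- exact: (profit_disjoint_pairs g1 g2 pS p'S disj).
- exact: (profit_succs g1 g2 (x := x)).
- exact: (profit_preds g1 g2 (y := y)).
Qed.
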